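(* Let $\ell\ge1$ and let $\mathbf{s},\mathbf{p}\in\mathbb{Z}^{\ell+1}$ be column vectors with $\mathbf{s}_{\ell+1}=1$. Set $d:=\mathbf{s}^T\mathbf{p}$ and assume $d\neq0$; let $\gamma$ be the gcd of the entries of $\mathbf{p}$. Then the matrix $L:=dI_{\ell+1}-\mathbf{p}\mathbf{s}^T$ has cokernel $$\mathbb{Z}^{\ell+1}/\mathrm{im}\,L\cong\mathbb{Z}\oplus\mathbb{Z}/\gamma\mathbb{Z}\oplus(\mathbb{Z}/d\mathbb{Z})^{\ell-1}.$$ *)

From HB Require Import structures.
From mathcomp Require Import all_boot all_order all_algebra.
Set Implicit Arguments. Unset Strict Implicit. Unset Printing Implicit Defensive.
Import Order.TTheory GRing.Theory Num.Theory.
Local Open Scope ring_scope.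

Definition in_im (n : nat) (A : 'M[int]_n) (x : 'cV[int]_n) : Prop :=
  exists z : 'cV[int]_n, x = A *m z.

(* coker_iso A B : Z^n / im A  is isomorphic (as abelian group) to Z^n / im B.
   Written out: there is a group homomorphism f : Z^n -> Z^n such that the
   induced map Z^n -> Z^n / im B is surjective with kernel exactly im A
   (first isomorphism theorem; every hom from the free group Z^n into
   Z^n / im B lifts to Z^n). *)
Definition coker_iso (n : nat) (A B : 'M[int]_n) : Prop :=
  exists f : 'cV[int]_n -> 'cV[int]_n,
    [/\ (forall x y, f (x + y) = f x + f y),
        (forall y, exists x, in_im B (f x - y)) &
        (forall x, in_im B (f x) <-> in_im A x)].

(* The diagonal matrix diag(0, g, d, ..., d) of size l+1 (l >= 1); its cokernel
   is Z (+) Z/gZ (+) (Z/dZ)^(l-1). *)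
Definition target_diag (l : nat) (g d : int) : 'M[int]_l.+1 :=
  \matrix_(i, j) (if i == j then
                    (if nat_of_ord i == 0%N then 0
                     else if nat_of_ord i == 1%N then g else d)
                  else 0).

Definition gcd_entries (n : nat) (p : 'cV[int]_n) : int :=
  \big[gcdz/0]_(i < n) p i 0.

From HB Require Import structures.
From Corelib Require Import Setoid.
From mathcomp Require Import all_boot all_order all_algebra.
From mathcomp Require Import ring.
Import Order.TTheory GRing.Theory Num.Theory.
Local Open Scope ring_scope.
Set Implicit Arguments. Unset Strict Implicit. Unset Printing Implicit Defensive.

(* Since L z = d z - (s^T z) p, the image of L consists of the x with
   s^T x = 0 lying in d Z^(l+1) + Z p.  As the last entry of s is 1, such an x
   is determined by its first l coordinates x', and the second condition
   becomes x' in d Z^l + Z p'.  A unimodular W with W p' = a e_1 (Smith form)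
   turns this into: (W x')_1 is divisible by gcd(a, d) and the other entries
   by d.  Finally gcd(a, d) = gcd(p', d) = gamma, because d is congruent to the
   last entry of p modulo gcd(p').  Hence x |-> (s^T x, W x') is a surjective
   homomorphism pulling back the image of diag(0, gamma, d, ..., d) to im L. *)

Definition in_line_mod n (d : int) (v x : 'cV[int]_n) : Prop :=
  exists (w : 'cV[int]_n) (k : int), x = d *: w + k *: v.

Lemma dotmxDZ n (s x y : 'cV[int]_n) (a b : int) :
  (s^T *m (a *: x + b *: y)) 0 0 = a * (s^T *m x) 0 0 + b * (s^T *m y) 0 0.
Proof. by rewrite mulmxDr -!scalemxAr [LHS]mxE !mxE. Qed.

Lemma mulmx_scalar_sub_outer n (s p z : 'cV[int]_n) (d : int) :
  (d%:M - p *m s^T) *m z = d *: z - (s^T *m z) 0 0 *: p.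
Proof.
by rewrite mulmxBl mul_scalar_mx -mulmxA {1}[s^T *m z]mx11_scalar mul_mx_scalar.
Qed.

Lemma in_im_scalar_sub_outer n (s p x : 'cV[int]_n) :
  (s^T *m p) 0 0 != 0 ->
  in_im (((s^T *m p) 0 0)%:M - p *m s^T) x <->
  (s^T *m x) 0 0 = 0 /\ in_line_mod ((s^T *m p) 0 0) p x.
Proof.
set d := (s^T *m p) 0 0 => d_neq0; split.
- case=> z ->; rewrite mulmx_scalar_sub_outer -scaleNr.
  split; last by exists z, (- (s^T *m z) 0 0).
  by rewrite dotmxDZ -/d mulNr mulrC subrr.
- case=> sx0 [w [k Dx]]; exists w; rewrite mulmx_scalar_sub_outer Dx -scaleNr.
  have : (k + (s^T *m w) 0 0) * d = 0 by rewrite -[RHS]sx0 Dx dotmxDZ -/d; ring.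
  by move/eqP; rewrite mulf_eq0 (negbTE d_neq0) orbF addr_eq0 => /eqP ->.
Qed.

Lemma in_im_diag_mx n (c : 'rV[int]_n) (y : 'cV[int]_n) :
  in_im (diag_mx c) y <-> forall i, (c ord0 i %| y i ord0)%Z.
Proof.
split=> [[z ->] i | c_dvd_y]; first by rewrite mul_diag_mx mxE dvdz_mulr.
exists (\col_i (y i ord0 %/ c ord0 i)%Z); apply/colP => i.
rewrite mul_diag_mx !mxE mulrC; have := c_dvd_y i.
by have [->|_ /divzK ->] := eqVneq (c 0 i) 0; rewrite // dvd0z mulr0 => /eqP.
Qed.

Lemma target_diagE l (g d : int) :
  target_diag l g d =
  diag_mx (row_mx (0 : 'rV[int]_1) (\row_(j < l) if j == 0 :> nat then g else d)).
Proof.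
apply/matrixP => i j; rewrite !mxE; case: (i == j); rewrite ?mulr0n ?mulr1n //.
by case: (splitP (i : 'I_(1 + l))) => [i0 ->|i' ->]; rewrite ?ord1 mxE.
Qed.

Lemma in_im_target_diag l (g d : int) (u : 'cV[int]_1) (v : 'cV[int]_l) :
  in_im (target_diag l g d) (col_mx u v) <->
  u 0 0 = 0 /\ forall j, ((if j == 0%N :> nat then g else d) %| v j ord0)%Z.
Proof.
rewrite target_diagE in_im_diag_mx; split=> [dvd_uv | [u0 dvd_v] i].
  split; first by have := dvd_uv (lshift l (0 : 'I_1));
    rewrite (@row_mxEl _ 1 1 l) (@col_mxEu _ 1 l 1) mxE dvd0z => /eqP.
  by move=> j; have := dvd_uv (rshift 1 j);
    rewrite (@row_mxEr _ 1 1 l) (@col_mxEd _ 1 l 1) mxE.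
case: (split_ordP (i : 'I_(1 + l))) => [i0 ->|j ->].
  by rewrite (@row_mxEl _ 1 1 l) (@col_mxEu _ 1 l 1) ord1 u0 dvdz0.
by rewrite (@row_mxEr _ 1 1 l) (@col_mxEd _ 1 l 1) mxE.
Qed.

Lemma eq_dvdz_ge0 (a b : int) : 0 <= a -> 0 <= b ->
  (forall x, (x %| a)%Z <-> (x %| b)%Z) -> a = b.
Proof.
case: a b => [m|//] [n|//] _ _ same_dvd; congr Posz; apply/eqP.
rewrite eqn_dvd; apply/andP; split.
  exact: (proj1 (same_dvd m) (dvdzz m)).
exact: (proj2 (same_dvd n) (dvdzz n)).
Qed.

Lemma gcd_entries_ge0 n (v : 'cV[int]_n) : 0 <= gcd_entries v.
Proof. by rewrite /gcd_entries; elim/big_rec: _ => // i y _ _. Qed.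

Lemma dvdz_big_gcd n (F : 'I_n -> int) x :
  (x %| \big[gcdz/0]_(i < n) F i)%Z <-> forall i, (x %| F i)%Z.
Proof.
elim: n F => [|n IHn] F; first by rewrite big_ord0 dvdz0; split=> // _ [].
rewrite big_ord_recl dvdz_gcd; split=> [/andP[x_F0 /IHn x_F] i | x_F].
  by case: (unliftP ord0 i) => [j ->|->].
by rewrite x_F; apply/IHn.
Qed.

Lemma dvdz_gcd_entries n (v : 'cV[int]_n) x :
  (x %| gcd_entries v)%Z <-> forall i, (x %| v i ord0)%Z.
Proof. exact: dvdz_big_gcd. Qed.

Lemma dvdz_mulmx m n (A : 'M[int]_(m, n)) (v : 'cV[int]_n) x :
  (forall j, (x %| v j ord0)%Z) -> forall i, (x %| (A *m v) i ord0)%Z.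
Proof. by move=> x_v i; rewrite mxE; apply: rpred_sum => j _; apply: dvdz_mull. Qed.

Lemma gcd_entries_mulmx_unit n (W : 'M[int]_n) (v : 'cV[int]_n) :
  W \in unitmx -> gcd_entries (W *m v) = gcd_entries v.
Proof.
move=> W_unit; apply: eq_dvdz_ge0 => [||x]; rewrite ?gcd_entries_ge0 //.
rewrite !dvdz_gcd_entries; split=> [x_Wv | /dvdz_mulmx//].
by rewrite -[v](mulKmx W_unit); apply: dvdz_mulmx.
Qed.

Lemma gcd_entries_scale_delta n (a : int) (i0 : 'I_n) :
  gcd_entries (a *: delta_mx i0 0) = `|a|%N.
Proof.
apply: eq_dvdz_ge0 => [||x]; rewrite ?gcd_entries_ge0 // dvdz_gcd_entries.
split=> [/(_ i0) | x_a i]; first by rewrite !mxE !eqxx mulr1.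
by rewrite mxE dvdz_mulr.
Qed.

Lemma in_line_mod_mulmx n (A : 'M[int]_n) (d : int) (v x : 'cV[int]_n) :
  in_line_mod d v x -> in_line_mod d (A *m v) (A *m x).
Proof.
by case=> w [k ->]; exists (A *m w), k; rewrite mulmxDr -!scalemxAr.
Qed.

Lemma in_line_mod_mulmx_unit n (W : 'M[int]_n) (d : int) (v x : 'cV[int]_n) :
  W \in unitmx -> in_line_mod d (W *m v) (W *m x) <-> in_line_mod d v x.
Proof.
move=> W_unit; split; last exact: in_line_mod_mulmx.
by move/(in_line_mod_mulmx (invmx W)); rewrite !mulKmx.
Qed.

Lemma in_line_mod_scale_delta n (d a : int) (i0 : 'I_n) (x : 'cV[int]_n) :
  in_line_mod d (a *: delta_mx i0 0) x <->
  forall i, ((if i == i0 then gcdz a d else d) %| x i ord0)%Z.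
Proof.
split=> [[w [k ->]] i | dvd_x].
  rewrite !mxE andbT mulrC; case: eqP => [->|_] /=; last first.
    by rewrite !mulr0 addr0 dvdz_mull.
  by rewrite mulr1n mulr1 rpredD ?dvdz_mull ?dvdz_mulr ?dvdz_gcdl ?dvdz_gcdr.
have [u [v Bezout_ad]] := Bezoutz a d.
have /dvdzP[q xi0] := dvd_x i0; rewrite eqxx in xi0.
exists (\col_i if i == i0 then q * v else (x i ord0 %/ d)%Z), (q * u).
apply/colP => i; rewrite !mxE andbT; case: eqP => [->|/eqP i_neq0] /=.
  by rewrite xi0 -Bezout_ad mulr1n; ring.
rewrite mulr0n !mulr0 addr0 mulrC divzK //.
by have := dvd_x i; rewrite (negbTE i_neq0).
Qed.

Lemma int_col_Smith_form n (v : 'cV[int]_n.+1) :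
  exists (W : 'M[int]_n.+1) (a : int), W \in unitmx /\ W *m v = a *: delta_mx 0 0.
Proof.
have [L L_unit [R _ [ds _ ->]]] := int_Smith_normal_form v.
exists (invmx L), (ds`_0 * R 0 0); split; first by rewrite unitmx_inv.
rewrite !mulmxA mulVmx // mul1mx; apply/colP => -[[|i] lt_i_n].
  by rewrite !mxE big_ord1 !mxE /= mulr1n mulr1.
by rewrite !mxE big_ord1 !mxE /= mulr0n mul0r mulr0.
Qed.

Lemma dotmx_row'_last n (s x : 'cV[int]_n.+1) :
  (s^T *m x) 0 0 =
  ((row' ord_max s)^T *m row' ord_max x) 0 0 + s ord_max 0 * x ord_max 0.
Proof.
rewrite [LHS]mxE big_ord_recr !mxE; congr (_ + _); apply: eq_bigr => j _.
by rewrite !mxE; congr (s _ 0 * x _ 0); apply: ord_inj; rewrite lift_max.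
Qed.

Section DropLastCoordinate.

Variables (n : nat) (s : 'cV[int]_n.+1).
Hypothesis s_last : s ord_max 0 = 1.

Lemma exists_row'_dotmx (u : 'cV[int]_n) (c : int) :
  exists x, row' ord_max x = u /\ (s^T *m x) 0 0 = c.
Proof.
pose x := \col_i oapp (u^~ 0) (c - ((row' ord_max s)^T *m u) 0 0) (unlift ord_max i).
have x_row' : row' ord_max x = u by apply/colP => j; rewrite !mxE liftK.
exists x; split=> //.
by rewrite dotmx_row'_last x_row' s_last mul1r [x _ _]mxE unlift_none /= addrC subrK.
Qed.

Lemma row'_dotmx_inj (x y : 'cV[int]_n.+1) :
  row' ord_max x = row' ord_max y -> (s^T *m x) 0 0 = (s^T *m y) 0 0 -> x = y.
Proof.
move=> xy_row'; rewrite !dotmx_row'_last xy_row' s_last !mul1r => /addrI xy_last.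
apply/colP => i; case: (unliftP ord_max i) => [j ->|-> //].
by have /colP/(_ j) := xy_row'; rewrite !mxE.
Qed.

Lemma in_line_mod_row' (p x : 'cV[int]_n.+1) : (s^T *m x) 0 0 = 0 ->
  in_line_mod ((s^T *m p) 0 0) p x <->
  in_line_mod ((s^T *m p) 0 0) (row' ord_max p) (row' ord_max x).
Proof.
set d := (s^T *m p) 0 0 => sx0; split=> [[w [k ->]] | [w [k Dx]]].
  by exists (row' ord_max w), k; rewrite linearD !linearZ.
have [w' [w'_row' sw']] := exists_row'_dotmx w (- k).
exists w', k; apply: row'_dotmx_inj; first by rewrite linearD !linearZ /= w'_row'.
by rewrite sx0 dotmxDZ sw' -/d mulrN mulrC addNr.
Qed.

Lemma gcd_entries_row' (p : 'cV[int]_n.+1) :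
  gcd_entries p = gcdz (gcd_entries (row' ord_max p)) ((s^T *m p) 0 0).
Proof.
set g := gcd_entries (row' ord_max p).
have g_dvd_dot : (g %| ((row' ord_max s)^T *m row' ord_max p) ord0 ord0)%Z.
  exact/dvdz_mulmx/dvdz_gcd_entries.
rewrite dotmx_row'_last s_last mul1r -(divzK g_dvd_dot) gcdzMDl.
apply: eq_dvdz_ge0 => [||x]; rewrite ?gcd_entries_ge0 // dvdz_gcd dvdz_gcd_entries.
split=> [x_p | /andP[/dvdz_gcd_entries x_row' x_last] i].
  by rewrite x_p andbT; apply/dvdz_gcd_entries => j; rewrite mxE.
by case: (unliftP ord_max i) => [j ->|-> //]; have := x_row' j; rewrite mxE.
Qed.

End DropLastCoordinate.

Lemma coker_iso_surjective n (A B : 'M[int]_n) (f : 'cV[int]_n -> 'cV[int]_n) :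
  {morph f : x y / x + y} -> (forall y, exists x, f x = y) ->
  (forall x, in_im B (f x) <-> in_im A x) -> coker_iso A B.
Proof.
move=> fD f_surj f_ker; exists f; split=> // y.
by have [x <-] := f_surj y; exists x, 0; rewrite subrr mulmx0.
Qed.

Unset Implicit Arguments.

Theorem lemma4p2 (l : nat) (s p : 'cV[int]_l.+1) :
  (1 <= l)%N ->
  s ord_max 0 = 1 ->
  (s^T *m p) 0 0 != 0 ->
  coker_iso (((s^T *m p) 0 0)%:M - p *m s^T)
            (target_diag l (gcd_entries p) ((s^T *m p) 0 0)).
Proof.
case: l s p => [//|l] s p _ s_last d_neq0; set d := (s^T *m p) 0 0 in d_neq0 *.
have [W [a [W_unit Wp]]] := int_col_Smith_form (row' ord_max p).
have gcd_ad : gcdz a d = gcd_entries p.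
  by rewrite (gcd_entries_row' s_last) -(gcd_entries_mulmx_unit _ W_unit) Wp
             gcd_entries_scale_delta.
pose f x : 'cV[int]_l.+2 := col_mx (s^T *m x) (W *m row' ord_max x).
apply: (@coker_iso_surjective _ _ _ f) => [x y | y | x].
- by rewrite /f !linearD /= (@add_col_mx _ 1 l.+1 1).
- pose y' : 'cV[int]_(1 + l.+1) := y.
  have [x [x_row' sx]] :=
    exists_row'_dotmx s_last (invmx W *m dsubmx y') (usubmx y' 0 0).
  exists x; rewrite /f x_row' mulKVmx // [s^T *m x]mx11_scalar sx -mx11_scalar.
  exact: (vsubmxK y').
have line_mod_iff : (s^T *m x) 0 0 = 0 -> in_line_mod d p x <->
    forall j, ((if j == 0%N :> nat then gcd_entries p else d)
               %| (W *m row' ord_max x) j ord0)%Z.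
  move=> sx0; rewrite (in_line_mod_row' s_last p sx0).
  by rewrite -(in_line_mod_mulmx_unit _ _ _ W_unit) Wp in_line_mod_scale_delta gcd_ad.
rewrite /f in_im_target_diag in_im_scalar_sub_outer //.
by split=> -[sx0 /(line_mod_iff sx0)].
Qed.
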